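(* Let $F$ be an arbitrary field and let $f\in F\langle X\rangle$ be a nonzero multilinear polynomial of degree $d$. Let $n\ge 2$ be such that $d<2n$. If $c\in M_n(F)$ satisfies $$f(c,a_2,\ldots,a_d)=f(a_1,c,a_3,\ldots,a_d)=\cdots=f(a_1,\ldots,a_{d-1},c)=0$$ for all $a_1,\ldots,a_d\in M_n(F)$, then $c\in F\cdot 1$.
   Context: $F\langle X\rangle$ is the free algebra over $F$ in countably many noncommuting indeterminates $x_1,x_2,\ldots$. A polynomial $f=f(x_1,\ldots,x_d)$ is multilinear of degree $d$ if $f=\sum_{\sigma\in S_d}\lambda_\sigma x_{\sigma(1)}\cdots x_{\sigma(d)}$ with $\lambda_\sigma\in F$. $1$ denotes the identity matrix. *)

From HB Require Import structures.
From mathcomp Require Import all_boot all_order all_algebra all_fingroup.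
Set Implicit Arguments. Unset Strict Implicit. Unset Printing Implicit Defensive.
Import GRing.Theory.
Local Open Scope ring_scope.

(* A multilinear polynomial of degree d in F<X>,
     f = \sum_{sigma in S_d} lam_sigma x_{sigma(1)} ... x_{sigma(d)},
   is represented by its coefficient family lam : {ffun 'S_d -> F}.
   Distinct permutations give distinct monomials, so f <> 0 iff lam <> 0. *)
Definition mlpoly (F : fieldType) (d : nat) := {ffun 'S_d -> F}.

Definition mxprod_perm (F : fieldType) (n d : nat) (s : 'S_d)
    (a : 'I_d -> 'M[F]_n) : 'M[F]_n :=
  foldr (fun i acc => a (s i) *m acc) 1%:M (enum 'I_d).

Definition mleval (F : fieldType) (n d : nat) (f : mlpoly F d)
    (a : 'I_d -> 'M[F]_n) : 'M[F]_n :=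
  \sum_(s : 'S_d) f s *: mxprod_perm s a.

Definition subst_at (F : fieldType) (n d : nat) (i : 'I_d) (c : 'M[F]_n)
    (a : 'I_d -> 'M[F]_n) : 'I_d -> 'M[F]_n :=
  fun j => if j == i then c else a j.

From HB Require Import structures.
From mathcomp Require Import all_boot all_order all_algebra all_fingroup.
From mathcomp Require Import zify.
Import GRing.Theory.
Local Open Scope ring_scope.

(* Call c an annihilator of the multilinear polynomial f when f vanishes as
   soon as c is substituted for one of its variables.  The proof of lemma2p3
   runs as follows.
   - Annihilators are closed under similarity c |-> P c P^-1, because every
     monomial is conjugated along with its arguments.
   - A non-scalar n x n matrix (n >= 2) is similar to a matrix X whose (0,1)
     entry is nonzero: a permutation moves a nonzero off-diagonal entry to
     position (0,1), and a shear 1 + e_0q creates one from two distinct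
     diagonal entries.
   - Staircase argument (this is where d < 2n is used): pick a monomial
     x_{s0 0} ... x_{s0 (d-1)} of f with nonzero coefficient, put X on the
     variable in position 1 and the matrix unit e_{t/2, ceil(t/2)} on the
     variable in position t <> 1.  The product of these matrices in the order
     of any monomial has (0, d/2) entry zero unless the monomial is the one of
     s0, whose product has (0, d/2) entry X_01.  Hence the (0, d/2) entry of
     the evaluation is f_{s0} X_01 <> 0, so X is not an annihilator.
   The degenerate degree d = 1 is handled directly: f = lam x_1 with lam <> 0. *)

Definition annihilator {F : fieldType} {n d : nat} (f : mlpoly F d)
    (c : 'M[F]_n) : Prop :=
  forall (i : 'I_d) (a : 'I_d -> 'M[F]_n), mleval f (subst_at i c a) = 0.

Lemma mlpoly_coef_neq0 {F : fieldType} {d : nat} {f : mlpoly F d} :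
  f <> 0 -> exists s : 'S_d, f s != 0.
Proof.
move=> f_neq0; case: (pickP (fun s => f s != 0)) => [s fs|f_eq0]; first by exists s.
by case: f_neq0; apply/ffunP => s; rewrite ffunE; apply/eqP/negbFE/f_eq0.
Qed.

Lemma sum_neq0_term (R : nmodType) (I : finType) (G : I -> R) :
  \sum_i G i != 0 -> exists i, G i != 0.
Proof.
move=> sum_neq0; case: (pickP (fun i => G i != 0)) => [i Gi|G_eq0]; first by exists i.
by move: sum_neq0; rewrite big1 ?eqxx // => i _; apply/eqP/negbFE/G_eq0.
Qed.

Lemma delta_mulmxE (R : pzSemiRingType) (n : nat) (a b p q : 'I_n)
    (M : 'M[R]_n) :
  (delta_mx a b *m M) p q = if p == a then M b q else 0.
Proof.
rewrite mxE (bigD1 b) //= big1 ?addr0 => [|j /negbTE jb]; last first.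
  by rewrite mxE jb andbF mul0r.
by rewrite mxE eqxx andbT mulr_natl mulrb.
Qed.

Lemma mulmx_deltaE (R : pzSemiRingType) (n : nat) (a b p q : 'I_n)
    (M : 'M[R]_n) :
  (M *m delta_mx a b) p q = if q == b then M p a else 0.
Proof.
rewrite mxE (bigD1 a) //= big1 ?addr0 => [|j /negbTE ja]; last first.
  by rewrite mxE ja mulr0.
by rewrite mxE eqxx mulr_natr mulrb.
Qed.

Section Similarity.
Context {F : fieldType} {n : nat}.

Definition similar (c X : 'M[F]_n) : Prop :=
  exists P Q : 'M[F]_n, [/\ P *m Q = 1%:M, Q *m P = 1%:M & X = P *m c *m Q].

Lemma similar_trans (c X Y : 'M[F]_n) : similar c X -> similar X Y -> similar c Y.
Proof.
move=> [P [Q [PQ QP ->]]] [P' [Q' [PQ' QP' ->]]].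
exists (P' *m P), (Q *m Q'); split; rewrite ?mulmxA //.
- by rewrite -(mulmxA P') PQ mulmx1 PQ'.
- by rewrite -(mulmxA Q) QP' mulmx1 QP.
Qed.

Lemma mxprod_perm_conj {d : nat} {P Q : 'M[F]_n} (s : 'S_d)
    {a b : 'I_d -> 'M[F]_n} :
  P *m Q = 1%:M -> Q *m P = 1%:M -> (forall j, b j = P *m a j *m Q) ->
  mxprod_perm s b = P *m mxprod_perm s a *m Q.
Proof.
move=> PQ QP conj_b; rewrite /mxprod_perm; elim: (enum 'I_d) => [|i r IH] /=.
  by rewrite mulmx1 PQ.
by rewrite conj_b IH -!mulmxA (mulmxA Q) QP mul1mx.
Qed.

Lemma annihilator_similar {d : nat} {f : mlpoly F d} {c X : 'M[F]_n} :
  similar c X -> annihilator f c -> annihilator f X.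
Proof.
move=> [P [Q [PQ QP ->]]] ann_c i a.
pose a' j := Q *m a j *m P.
have conj_args j : subst_at i (P *m c *m Q) a j = P *m subst_at i c a' j *m Q.
  rewrite /subst_at /a'; case: (j == i) => //.
  by rewrite !mulmxA PQ mul1mx -mulmxA PQ mulmx1.
transitivity (P *m mleval f (subst_at i c a') *m Q); last first.
  by rewrite ann_c mulmx0 mul0mx.
rewrite /mleval mulmx_sumr mulmx_suml; apply: eq_bigr => s _.
by rewrite (mxprod_perm_conj s PQ QP conj_args) -scalemxAr -scalemxAl.
Qed.

End Similarity.

Section NonScalar.
Context {F : fieldType} {n' : nat}.
Local Notation n := n'.+2.
Local Notation i0 := (inord 0 : 'I_n).
Local Notation i1 := (inord 1 : 'I_n).

Lemma similar_perm (c : 'M[F]_n) {p q : 'I_n} :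
  p != q -> exists2 X, similar c X & X i0 i1 = c p q.
Proof.
move=> pq.
pose s := (tperm i1 (tperm i0 p q) * tperm i0 p)%g.
have i01 : i0 != i1 by rewrite -val_eqE /= !inordK.
have q'0 : tperm i0 p q != i0.
  by rewrite (canF_eq (tpermK i0 p)) tpermL eq_sym.
have s0 : s i0 = p by rewrite permM [tperm i1 _ _]tpermD ?tpermL // eq_sym.
have s1 : s i1 = q by rewrite permM tpermL tpermK.
exists (perm_mx s *m c *m perm_mx s^-1).
  by exists (perm_mx s), (perm_mx s^-1); rewrite -!perm_mxM ?mulgV ?mulVg perm_mx1.
by rewrite -row_permE -col_permE !mxE s0 s1.
Qed.

Lemma similar_shear (c : 'M[F]_n) {q : 'I_n} : q != i0 ->
  exists2 X, similar c X & X i0 q = c i0 q + c q q - c i0 i0 - c q i0.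
Proof.
move=> q0; pose D : 'M[F]_n := delta_mx i0 q.
have DD : D *m D = 0 by rewrite mul_delta_mx_cond (negbTE q0) mulr0n.
exists ((1%:M + D) *m c *m (1%:M - D)).
  exists (1%:M + D), (1%:M - D); split => //.
    by rewrite mulmxDl mul1mx mulmxBr mulmx1 DD subr0 subrK.
  by rewrite mulmxBl mul1mx mulmxDr mulmx1 DD addr0 addrK.
rewrite mulmxDl mul1mx mulmxBr mulmx1 mulmxDl -mulmxA.
have -> (A B C E : 'M[F]_n) :
  (A + B - (C + E)) i0 q = A i0 q + B i0 q - (C i0 q + E i0 q) by rewrite !mxE.
by rewrite !delta_mulmxE !mulmx_deltaE !eqxx opprD addrA.
Qed.

Lemma scalar_or_similar_offdiag (c : 'M[F]_n) :
  (exists l, c = l%:M) \/ exists2 X, similar c X & X i0 i1 != 0.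
Proof.
case: (pickP (fun pq : 'I_n * 'I_n => (pq.1 != pq.2) && (c pq.1 pq.2 != 0))).
  move=> [p q] /andP[/= pq cpq]; right.
  by have [X cX X01] := similar_perm c pq; exists X; rewrite ?X01.
move=> offdiag0.
have diag_c p q : p != q -> c p q = 0.
  by move=> pq; have := offdiag0 (p, q); rewrite /= pq => /negbFE/eqP.
case: (pickP (fun q => c q q != c i0 i0)) => [q cqq|diag_const]; last first.
  left; exists (c i0 i0); apply/matrixP => p q; rewrite mxE.
  case: (eqVneq p q) => [<-|pq]; last by rewrite diag_c // mulr0n.
  by rewrite mulr1n; apply/eqP/negbFE/diag_const.
have q0 : q != i0 by apply: contraNneq cqq => ->.
have [Y cY Y0q] := similar_shear c q0.
have i0q : i0 != q by rewrite eq_sym.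
have [X YX X01] := similar_perm Y i0q.
right; exists X; first exact: similar_trans cY YX.
by rewrite X01 Y0q (diag_c _ _ i0q) (diag_c _ _ q0) add0r subr0 subr_eq0.
Qed.

End NonScalar.

Lemma uniq_all_pred1 (T : eqType) (x : T) (s : seq T) :
  uniq s -> all (pred1 x) s -> x \in s -> s = [:: x].
Proof.
case: s => [|y [|z s]] //=; first by move=> _ /andP[/eqP ->].
rewrite inE => /andP[/norP[/eqP yz _] _] /and3P[/eqP y_x /eqP z_x _].
by case: yz; rewrite y_x z_x.
Qed.

Section Staircase.
Context {F : fieldType} {n' d : nat}.
Local Notation n := n'.+2.
Hypothesis d_small : (d < 2 * n)%N.
Variable X : 'M[F]_n.

Definition stair (t : nat) : 'M[F]_n := delta_mx (inord t./2) (inord (uphalf t)).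

Definition letter (t : nat) : 'M[F]_n := if t == 1%N then X else stair t.

Definition word (l : seq nat) : 'M[F]_n :=
  foldr (fun t acc => letter t *m acc) 1%:M l.

Definition stair_positions (l : seq nat) : bool :=
  all (fun t => (t < d)%N && (t != 1%N)) l.

Lemma stair_bounds {t : nat} : (t < d)%N -> (t./2 < n)%N /\ (uphalf t < n)%N.
Proof. by move=> td; split; lia. Qed.

Lemma word_cat (l1 l2 : seq nat) : word (l1 ++ l2) = word l1 *m word l2.
Proof. by elim: l1 => [|t l1 IH] /=; rewrite ?mul1mx // IH mulmxA. Qed.

Lemma word_cons_stair (t : nat) (l : seq nat) (p q : 'I_n) :
  t != 1%N -> (t < d)%N ->
  word (t :: l) p q = if nat_of_ord p == t./2 then word l (inord (uphalf t)) q else 0.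
Proof.
move=> t1 td; have [row_t _] := stair_bounds td.
by rewrite /= /letter (negbTE t1) delta_mulmxE -val_eqE /= inordK.
Qed.

Lemma word_row0 {l : seq nat} {k : 'I_n} :
  stair_positions l -> word l (inord 0) k != 0 ->
  nat_of_ord k = 0%N /\ all (pred1 0%N) l.
Proof.
elim: l => [|t l IH] /=.
  rewrite mxE; have [<- _|_] := eqVneq (inord 0 : 'I_n) k; last by rewrite mulr0n eqxx.
  by rewrite inordK.
move=> /andP[/andP[td t1] pos_l]; rewrite word_cons_stair // inordK //.
case: ifP => [/eqP t_row0|_]; last by rewrite eqxx.
have -> : t = 0%N by lia.
by move=> /(IH pos_l)[k0 l0]; rewrite k0 l0.
Qed.

(* Along a nonzero entry (p,q) of a word, the staircase positions are at
   least 2p and occur in increasing order: rows never decrease. *)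
Lemma word_sorted {l : seq nat} {p q : 'I_n} :
  stair_positions l -> uniq l -> word l p q != 0 ->
  sorted ltn l /\ all (fun t => 2 * p <= t)%N l.
Proof.
elim: l p => [|t l IH] p /=; first by [].
move=> /andP[/andP[td t1] pos_l] /andP[t_l l_uniq].
have [_ col_t] := stair_bounds td.
rewrite word_cons_stair //; case: ifP => [/eqP p_row|_]; last by rewrite eqxx.
move=> /(IH _ pos_l l_uniq)[l_sorted l_ge]; rewrite inordK // in l_ge.
have t_lt : all (ltn t) l.
  apply/allP => s sl; have := allP l_ge s sl.
  have : s != t by apply: contraNneq t_l => <-.
  rewrite /ltn /=; lia.
rewrite (path_sortedE ltn_trans) t_lt l_sorted; split=> //.
apply/andP; split; first lia.
by apply/allP => s sl; have := allP t_lt s sl; rewrite /ltn /=; lia.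
Qed.

Lemma word_iota_tail (k t0 : nat) (p : 'I_n) : (t0 + k = d)%N -> (2 <= t0)%N ->
  word (iota t0 k) p (inord d./2) = (nat_of_ord p == t0./2)%:R.
Proof.
elim: k t0 p => [|k IH] t0 p /= t0_end t0_ge2.
  rewrite mxE -val_eqE /= inordK; last lia.
  by rewrite addn0 in t0_end; rewrite t0_end.
have [_ col_t0] := @stair_bounds t0 ltac:(lia).
rewrite -/(word _) word_cons_stair; [|lia|lia].
rewrite IH; [|lia|lia]; rewrite inordK // -uphalfE eqxx.
by case: ifP.
Qed.

Lemma word_split_entry {b a : seq nat} {p q : 'I_n} :
  word (b ++ 1%N :: a) p q != 0 ->
  exists k j, word b p k != 0 /\ word a j q != 0.
Proof.
rewrite word_cat mxE => /sum_neq0_term[k]; rewrite mulf_eq0 negb_or => /andP[bk].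
rewrite /= /letter /= mxE => /sum_neq0_term[j].
by rewrite mulf_eq0 negb_or => /andP[_ aj]; exists k, j.
Qed.

Hypothesis d_gt1 : (1 < d)%N.

(* In the natural order the word is e_00 X e_11 e_12 ... e_{(d-1)/2, d/2},
   whose (0, d/2) entry is X_01. *)
Lemma word_iota : word (iota 0 d) (inord 0) (inord d./2) = X (inord 0) (inord 1).
Proof.
have -> : iota 0 d = [:: 0%N, 1%N & iota 2 (d - 2)].
  by case: d d_gt1 => [|[|d']] //= _; rewrite subn2.
rewrite word_cons_stair //; last lia.
rewrite inordK //= /letter /= mxE.
have tail (j : 'I_n) : word (iota 2 (d - 2)) j (inord d./2) = (j == 1%N :> nat)%:R.
  by rewrite word_iota_tail //; lia.
under eq_bigr => j _ do rewrite tail.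
rewrite (bigD1 (inord 1)) //= inordK // eqxx mulr1 big1 ?addr0 // => j j1.
suff /negbTE -> : nat_of_ord j != 1%N by rewrite mulr0.
by apply: contraNneq j1 => j_1; rewrite -val_eqE /= inordK // j_1.
Qed.

(* Only the natural order of positions gives a word with nonzero (0, d/2)
   entry: the part before X stays in row 0, so it is e_00, and the part after
   X is increasing. *)
Lemma word_eq_iota {l : seq nat} : uniq l -> l =i iota 0 d ->
  word l (inord 0) (inord d./2) != 0 -> l = iota 0 d.
Proof.
have m_pos : nat_of_ord (inord d./2 : 'I_n) != 0%N by rewrite inordK; lia.
move=> l_uniq l_iota.
have l1 : 1%N \in l by rewrite l_iota mem_iota; lia.
move: l_uniq l_iota; case/splitPr: l1 => b a.
rewrite cat_uniq /= => /and4P[b_uniq /norP[b1 _] a1 a_uniq] l_iota.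
have l_lt t : t \in b ++ 1%N :: a -> (t < d)%N by rewrite l_iota mem_iota.
have pos_b : stair_positions b.
  apply/allP => t tb; rewrite l_lt ?mem_cat ?tb //=.
  by apply: contraNneq b1 => <-.
have pos_a : stair_positions a.
  apply/allP => t ta; rewrite l_lt ?mem_cat ?inE ?ta ?orbT //=.
  by apply: contraNneq a1 => <-.
case/word_split_entry => k [j [bk aj]].
have [_ b0] := word_row0 pos_b bk.
have [a_sorted a_ge] := word_sorted pos_a a_uniq aj.
have a0 : 0%N \notin a.
  apply/negP => a0; have j0 : nat_of_ord j = 0%N.
    by have := allP a_ge 0%N a0; rewrite leqn0 muln_eq0 /= => /eqP.
  have j_eq : j = inord 0 by apply/val_inj; rewrite /= inordK // j0.
  rewrite j_eq in aj; have [m0 _] := word_row0 pos_a aj.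
  by rewrite m0 in m_pos.
have b_eq : b = [:: 0%N].
  apply: uniq_all_pred1 => //.
  have := l_iota 0%N; rewrite mem_iota mem_cat inE (negbTE a0) orbF /=.
  by rewrite add0n (ltnW d_gt1) => /orP[].
subst b.
have a_gt1 : all (ltn 1) a.
  apply/allP => t ta; have /andP[_ t1] := allP pos_a t ta.
  have t0 : t != 0%N by apply: contraNneq a0 => <-.
  by case: t t0 t1 {ta} => [|[|t]].
have l_sorted : sorted ltn [:: 0%N, 1%N & a].
  by rewrite /= (path_sortedE ltn_trans) a_gt1 a_sorted.
exact: (irr_sorted_eq ltn_trans ltnn l_sorted (iota_ltn_sorted 0 d) l_iota).
Qed.
End Staircase.

Section Positions.
Context {d : nat}.

(* For the monomial of s, the positions in the monomial of s0 of its
   successive variables. *)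
Definition positions (s0 s : 'S_d) : seq nat :=
  [seq val ((s0^-1)%g (s i)) | i <- enum 'I_d].

Lemma positions_uniq (s0 s : 'S_d) : uniq (positions s0 s).
Proof.
by rewrite map_inj_uniq ?enum_uniq // => x y /val_inj /perm_inj /perm_inj.
Qed.

Lemma positions_mem (s0 s : 'S_d) : positions s0 s =i iota 0 d.
Proof.
move=> t; rewrite mem_iota add0n /=.
apply/mapP/idP => [[i _ ->]|t_lt]; first exact: ltn_ord.
by exists ((s^-1)%g (s0 (Ordinal t_lt))); rewrite ?mem_enum // permKV permK.
Qed.

Lemma positions_self (s0 : 'S_d) : positions s0 s0 = iota 0 d.
Proof. by rewrite -val_enum_ord; apply: eq_map => i; rewrite permK. Qed.

Lemma positions_inj (s0 s : 'S_d) : positions s0 s = iota 0 d -> s = s0.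
Proof.
rewrite -val_enum_ord => /eq_in_map pos_val; apply/permP => i.
by have /val_inj/(congr1 s0) := pos_val i (mem_enum _ i); rewrite permKV.
Qed.

End Positions.

Section StaircaseEvaluation.
Context {F : fieldType} {n' d : nat} {f : mlpoly F d}.
Local Notation n := n'.+2.
Hypotheses (d_small : (d < 2 * n)%N) (d_gt1 : (1 < d)%N).
Local Notation pos1 := (Ordinal d_gt1).

Definition stair_args (s0 : 'S_d) (X : 'M[F]_n) : 'I_d -> 'M[F]_n :=
  subst_at (s0 pos1) X (fun j => stair (val ((s0^-1)%g j))).

Lemma mxprod_stair_args (s0 s : 'S_d) (X : 'M[F]_n) :
  mxprod_perm s (stair_args s0 X) = word X (positions s0 s).
Proof.
rewrite /mxprod_perm /positions; elim: (enum 'I_d) => //= i r ->; congr (_ *m _).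
rewrite /stair_args /subst_at /letter.
by rewrite -[1%N]/(val pos1) val_eqE (canF_eq (permKV s0)).
Qed.

(* Only the monomial of s0 contributes to the (0, d/2) entry. *)
Lemma mleval_stair_args (s0 : 'S_d) (X : 'M[F]_n) :
  mleval f (stair_args s0 X) (inord 0) (inord d./2) = f s0 * X (inord 0) (inord 1).
Proof.
rewrite /mleval summxE (bigD1 s0) //= big1 ?addr0 => [|s s_s0].
  by rewrite mxE mxprod_stair_args positions_self word_iota.
rewrite mxE mxprod_stair_args; apply/eqP; rewrite mulf_eq0; apply/orP; right.
apply: contraNT s_s0 => /(word_eq_iota d_small X d_gt1).
by move=> /(_ (positions_uniq s0 s) (positions_mem s0 s)) /positions_inj ->.
Qed.

Lemma annihilator_entry01 {s0 : 'S_d} {X : 'M[F]_n} :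
  f s0 != 0 -> annihilator f X -> X (inord 0) (inord 1) = 0.
Proof.
move=> fs0 /(_ (s0 pos1) (fun j => stair (val ((s0^-1)%g j)))).
move/(congr1 (fun M : 'M[F]_n => M (inord 0) (inord d./2))).
rewrite -/(stair_args s0 X) mleval_stair_args mxE => /eqP.
by rewrite mulf_eq0 (negbTE fs0) => /eqP.
Qed.

End StaircaseEvaluation.

Lemma annihilator_deg1 {F : fieldType} {n : nat} {f : mlpoly F 1} {c : 'M[F]_n} :
  f <> 0 -> annihilator f c -> c = 0.
Proof.
move=> f_neq0 ann_c.
have perm_trivial (s : 'S_1) : s = 1%g by apply/permP => i; rewrite !ord1.
have [s fs] := mlpoly_coef_neq0 f_neq0; rewrite (perm_trivial s) in fs.
have := ann_c ord0 (fun _ => 0).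
rewrite /mleval (bigD1 1%g) //= big1 ?addr0 => [|s' /eqP[]]; last exact: perm_trivial.
rewrite /mxprod_perm enum_ordSl enum_ord0 /= mulmx1 /subst_at perm1 eqxx.
by move/eqP; rewrite scaler_eq0 (negbTE fs) => /eqP.
Qed.

Theorem lemma2p3 (F : fieldType) (d n : nat) (f : mlpoly F d)
  (hf : f <> 0) (hd : (0 < d)%N) (hn : (2 <= n)%N) (hdn : (d < 2 * n)%N)
  (c : 'M[F]_n)
  (hc : forall (i : 'I_d) (a : 'I_d -> 'M[F]_n), mleval f (subst_at i c a) = 0) :
  exists l : F, c = l%:M.
Proof.
have [d_le1|d_gt1] := leqP d 1.
  have d1 : d = 1%N by apply/eqP; rewrite eqn_leq d_le1 hd.
  by subst d; exists 0; rewrite (annihilator_deg1 hf hc) raddf0.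
case: n c hc hn hdn => [|[|n']] // c hc _ hdn.
have [s0 fs0] := mlpoly_coef_neq0 hf.
have [//|[X cX X01]] := scalar_or_similar_offdiag c.
case/eqP: X01; apply: (annihilator_entry01 hdn d_gt1 fs0).
exact: annihilator_similar cX hc.
Qed.
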